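(* Let $(X,Y)$ be a bivariate random vector that is reverse exchangeable, i.e. $(X,Y)$ and $(-Y,-X)$ have the same joint distribution. Then $$|\max(X,Y)|\overset{d}{=}|\min(X,Y)|\overset{d}{=}|X|\overset{d}{=}|Y|.$$
   Context: $\overset{d}{=}$ denotes equality in distribution. *)

From HB Require Import structures.
From mathcomp Require Import all_boot all_order all_algebra.
From mathcomp Require Import all_classical all_reals all_analysis.
Set Implicit Arguments. Unset Strict Implicit. Unset Printing Implicit Defensive.
Import Order.TTheory GRing.Theory Num.Theory.
Local Open Scope classical_set_scope.
Local Open Scope ring_scope.

Definition eq_in_law d (T : measurableType d) (R : realType)
  (P : probability T R) d' (U : measurableType d') (X Y : T -> U) : Prop :=
  forall A : set U, measurable A -> P (X @^-1` A) = P (Y @^-1` A).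

Definition reverse_exchangeable d (T : measurableType d) (R : realType)
  (P : probability T R) (X Y : T -> R) : Prop :=
  eq_in_law P (fun w => (X w, Y w)) (fun w => (- Y w, - X w)).

From HB Require Import structures.
From mathcomp Require Import all_boot all_order all_algebra.
From mathcomp Require Import all_classical all_reals all_analysis.
From mathcomp Require Import measurable_realfun.
Set Implicit Arguments. Unset Strict Implicit. Unset Printing Implicit Defensive.
Import Order.TTheory GRing.Theory Num.Theory.
Local Open Scope classical_set_scope.
Local Open Scope ring_scope.

(* Measurable images of (X, Y) and of (-Y, -X) have the same law.  As
   |max(-y, -x)| = |min(x, y)| and |-y| = |y|, this gives |max(X,Y)| =d
   |min(X,Y)| and |X| =d |Y|.  Pointwise, (|min(X,Y)|, |max(X,Y)|) is a
   permutation of (|X|, |Y|), so by inclusion-exclusion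
   P(|min| ∈ A) + P(|max| ∈ A) = P(|X| ∈ A) + P(|Y| ∈ A), which by the two
   previous equalities reads 2 P(|min| ∈ A) = 2 P(|X| ∈ A). *)

Lemma eq_in_law_comp d (T : measurableType d) (R : realType)
    (P : probability T R) d' (U : measurableType d') d'' (V : measurableType d'')
    (X Y : T -> U) (f : U -> V) :
  measurable_fun setT f -> eq_in_law P X Y -> eq_in_law P (f \o X) (f \o Y).
Proof.
move=> mf XY A mA; apply: (XY (f @^-1` A)).
by rewrite -[f @^-1` A]setTI; exact: mf.
Qed.

Lemma measureUI d (T : ringOfSetsType d) (R : realFieldType)
    (mu : {content set T -> \bar R}) (A B : set T) :
  measurable A -> measurable B ->
  (mu (A `|` B) + mu (A `&` B) = mu A + mu B)%E.
Proof.
move=> mA mB.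
have mBA : measurable (B `\` A) by exact: measurableD.
have -> : A `|` B = A `|` (B `\` A) by rewrite setDE setUIr setUv setIT.
rewrite -[in RHS](setUIDK B A) [B `&` A]setIC.
rewrite measureU ?setDIK // [in RHS]measureU //.
- by rewrite addeAC addeA.
- exact: measurableI.
- by rewrite setIAC setDIK set0I.
Qed.

Section min_max_preimage.
Variables (T : Type) (disp : Order.disp_t) (O : orderType disp).
Variables (U : Type) (f : O -> U) (A : set U) (X Y : T -> O).

Lemma preimage_minmaxU :
  (fun w => f (Order.min (X w) (Y w))) @^-1` A `|`
  (fun w => f (Order.max (X w) (Y w))) @^-1` A =
  (f \o X) @^-1` A `|` (f \o Y) @^-1` A.
Proof. by apply/seteqP; split => w /=; case: (leP (X w) (Y w)) => _; tauto. Qed.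

Lemma preimage_minmaxI :
  (fun w => f (Order.min (X w) (Y w))) @^-1` A `&`
  (fun w => f (Order.max (X w) (Y w))) @^-1` A =
  (f \o X) @^-1` A `&` (f \o Y) @^-1` A.
Proof. by apply/seteqP; split => w /=; case: (leP (X w) (Y w)) => _; tauto. Qed.

End min_max_preimage.

Lemma measure_preimage_minmax d (T : measurableType d) (R : realType)
    (mu : {content set T -> \bar R}) d' (U : measurableType d') (f : R -> U)
    (X Y : T -> R) (A : set U) :
  measurable_fun setT X -> measurable_fun setT Y ->
  measurable_fun setT f -> measurable A ->
  (mu ((fun w => f (Num.min (X w) (Y w))) @^-1` A) +
   mu ((fun w => f (Num.max (X w) (Y w))) @^-1` A) =
   mu ((f \o X) @^-1` A) + mu ((f \o Y) @^-1` A))%E.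
Proof.
move=> mX mY mf mA.
have mpre (g : T -> U) : measurable_fun setT g -> measurable (g @^-1` A).
  by move=> mg; rewrite -[g @^-1` A]setTI; exact: mg.
have mmin := mpre _ (measurableT_comp mf (measurable_minr mX mY)).
have mmax := mpre _ (measurableT_comp mf (measurable_maxr mX mY)).
have mfX := mpre _ (measurableT_comp mf mX).
have mfY := mpre _ (measurableT_comp mf mY).
by rewrite -measureUI // preimage_minmaxU preimage_minmaxI measureUI.
Qed.

Lemma adde_self_inj (R : numDomainType) : injective (fun x : \bar R => x + x)%E.
Proof.
move=> [x| |] [y| |] //= [] /eqP.
by rewrite -!mulr2n eqr_pMn2r // => /eqP ->.
Qed.

Theorem theorem2p4 (d : measure_display) (T : measurableType d) (R : realType)
  (P : probability T R) (X Y : T -> R)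
  (mX : measurable_fun setT X) (mY : measurable_fun setT Y) :
  reverse_exchangeable P X Y ->
  [/\ eq_in_law P (fun w => `|Num.max (X w) (Y w)|) (fun w => `|Num.min (X w) (Y w)|),
      eq_in_law P (fun w => `|Num.min (X w) (Y w)|) (fun w => `|X w|)
    & eq_in_law P (fun w => `|X w|) (fun w => `|Y w|)].
Proof.
move=> rex.
have law_maxmin : eq_in_law P (fun w => `|Num.max (X w) (Y w)|)
                              (fun w => `|Num.min (X w) (Y w)|).
  have -> : (fun w => `|Num.min (X w) (Y w)|) =
            (fun w => `|Num.max (- Y w) (- X w)|).
    by apply/funext => w; rewrite -oppr_min normrN minC.
  apply: (eq_in_law_comp (f := fun p : R * R => `|Num.max p.1 p.2|) _ rex).
  exact: measurableT_comp (measurable_maxr measurable_fst measurable_snd).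
have law_XY : eq_in_law P (fun w => `|X w|) (fun w => `|Y w|).
  have -> : (fun w => `|Y w|) = (fun w => `|- Y w|).
    by apply/funext => w; rewrite normrN.
  apply: (eq_in_law_comp (f := fun p : R * R => `|p.1|) _ rex).
  exact: measurableT_comp measurable_fst.
split => // A mA; apply: adde_self_inj => /=.
have : (P ((fun w => `|Num.min (X w) (Y w)|%R) @^-1` A) +
         P ((fun w => `|Num.max (X w) (Y w)|%R) @^-1` A) =
         P ((fun w => `|X w|%R) @^-1` A) + P ((fun w => `|Y w|%R) @^-1` A))%E
  := measure_preimage_minmax P mX mY (@normr_measurable R setT) mA.
by rewrite law_maxmin // -law_XY.
Qed.
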